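(* We have $\mathrm{ppn}(K_{1,1,c})=1$ for all positive integers $c$ if and only if the Twin Prime Conjecture (there are infinitely many primes $p$ such that $p+2$ is also prime) is true.
   Context: $K_{1,1,c}$ is the complete 3-partite graph with partite sets of sizes $1,1,c$. A $k$-prime product distance labeling of a finite graph $G$ (for a positive integer $k$) is an injective map $L:V(G)\to\mathbb{Z}$ such that $|L(u)-L(v)|>1$ for all distinct vertices $u,v$ of $G$, and such that for every pair of adjacent vertices $u,v$ the integer $|L(u)-L(v)|$ has at most $k$ prime factors counted with multiplicity. The prime product number $\mathrm{ppn}(G)$ is the least positive integer $k$ such that $G$ has a $k$-prime product distance labeling. *)

From mathcomp Require Import all_boot all_order all_algebra.
Set Implicit Arguments. Unset Strict Implicit. Unset Printing Implicit Defensive.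
Import GRing.Theory Num.Theory.

Definition bigOmega (n : nat) : nat := \sum_(p <- primes n) logn p n.

(* A finite simple graph: vertex finType with a symmetric irreflexive
   adjacency relation (only `adj` is used below). *)

Definition kppd_labeling (T : finType) (adj : rel T) (k : nat) (L : T -> int) : Prop :=
  injective L /\
  (forall u v : T, u != v -> (1 < `|L u - L v|)%N) /\
  (forall u v : T, adj u v -> (bigOmega `|L u - L v| <= k)%N).

Definition has_kppd_labeling (T : finType) (adj : rel T) (k : nat) : Prop :=
  exists L : T -> int, kppd_labeling adj k L.

Definition ppn_eq (T : finType) (adj : rel T) (k : nat) : Prop :=
  (0 < k)%N /\ has_kppd_labeling adj k /\
  (forall j : nat, (0 < j)%N -> (j < k)%N -> ~ has_kppd_labeling adj j).

(* K_{1,1,c}: vertices 'I_(c+2); vertex 0 and vertex 1 form the two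
   singleton parts, vertices 2..c+1 form the part of size c. *)
Definition K11_part (c : nat) (x : 'I_(c.+2)) : nat := minn x 2.
Definition K11c_adj (c : nat) : rel 'I_(c.+2) :=
  fun x y => K11_part x != K11_part y.

Definition twin_prime_conjecture : Prop :=
  forall N : nat, exists p : nat, (N <= p)%N /\ prime p /\ prime p.+2.

From mathcomp Require Import all_boot all_order all_algebra.
From mathcomp Require Import zify.

Set Implicit Arguments.
Unset Strict Implicit.
Unset Printing Implicit Defensive.

Import GRing.Theory Num.Theory.

(* Labelling the two singleton parts by 0 and 2 and the big part by distinct
   numbers p + 2 with (p, p + 2) twin primes spaced at least 2 apart gives a
   1-labeling, since every edge length is 2, p or p + 2.  Conversely, in a
   1-labeling adjacent labels differ by primes.  If a, b label the singletons
   and x labels a vertex of the big part, then |x - a|, |x - b| and |a - b|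
   are prime; as soon as |x - a| > 2 and x <> b +- 2, the two odd primes
   |x - a| and |x - b| differ by the even prime |a - b| = 2, so they are twin
   primes of size about |x - a|.  Only boundedly many labels escape this, so
   large c forces arbitrarily large twin primes. *)

Lemma logn_le_sum (s : seq nat) q n :
  (q \in primes n -> q \in s) -> logn q n <= \sum_(p <- s) logn p n.
Proof.
have [qn /(_ isT) qs|qn _] := boolP (q \in primes n).
  by rewrite (big_rem q) //= leq_addr.
by move: qn; rewrite -logn_gt0 lt0n negbK => /eqP->.
Qed.

Lemma logn_le_bigOmega p n : logn p n <= bigOmega n.
Proof. exact: logn_le_sum. Qed.

Lemma logn_add_le_bigOmega p q n :
  p != q -> logn p n + logn q n <= bigOmega n.
Proof.
move=> pq; have [pn|pn] := boolP (p \in primes n); last first.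
  by move: pn; rewrite -logn_gt0 lt0n negbK => /eqP->; apply: logn_le_bigOmega.
rewrite /bigOmega (big_rem p) //= leq_add2l; apply: logn_le_sum => qn.
by rewrite mem_rem_uniq ?primes_uniq // inE eq_sym pq.
Qed.

Lemma bigOmega_prime p : prime p -> bigOmega p = 1.
Proof. by move=> pp; rewrite /bigOmega primes_prime // big_seq1 logn_prime ?eqxx. Qed.

Lemma pdiv_logn_gt0 n : 1 < n -> 0 < logn (pdiv n) n.
Proof.
move=> n_gt1; rewrite logn_gt0 mem_primes pdiv_prime ?pdiv_dvd //=; lia.
Qed.

Lemma bigOmega_le1_prime n : 1 < n -> bigOmega n <= 1 -> prime n.
Proof.
move=> n_gt1 n_Om; apply/negPn/negP => /primePn[n_lt2|[d /andP[d_gt1 d_ltn] dn]]; first lia.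
have n_de : n = d * (n %/ d) by rewrite mulnC divnK.
set e := n %/ d in n_de; have e_gt1 : 1 < e by nia.
have lognM_de r : logn r n = logn r d + logn r e by rewrite n_de lognM //; lia.
have := pdiv_logn_gt0 d_gt1; have := pdiv_logn_gt0 e_gt1.
have [<-|pq] := eqVneq (pdiv d) (pdiv e).
  by have := logn_le_bigOmega (pdiv d) n; rewrite lognM_de; lia.
have := logn_add_le_bigOmega n pq; rewrite !lognM_de; lia.
Qed.

Lemma kppd1_adj_prime (T : finType) (adj : rel T) (L : T -> int) u v :
  kppd_labeling adj 1 L -> adj u v -> u != v -> prime `|L u - L v|.
Proof.
by move=> [_ [Lsep LOm]] uv u_neq_v; apply: bigOmega_le1_prime; [apply: Lsep | apply: LOm].
Qed.

Lemma sep_labeling_inj (T : finType) (L : T -> int) :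
  (forall u v, u != v -> 1 < `|L u - L v|) -> injective L.
Proof.
by move=> Lsep u v Luv; apply/eqP/negPn/negP => /Lsep; rewrite Luv subrr.
Qed.

Lemma ppn_eq1 (T : finType) (adj : rel T) : has_kppd_labeling adj 1 -> ppn_eq adj 1.
Proof. by move=> hL; split=> //; split=> // j j_gt0 /leq_trans /(_ j_gt0); rewrite ltnn. Qed.

Section TwinLabeling.

Hypothesis twin_primes : twin_prime_conjecture.

Lemma twin_prime_above N : exists p, [&& N <= p, prime p & prime p.+2].
Proof. by have [p [? [? ?]]] := twin_primes N; exists p; apply/and3P. Qed.

Definition next_twin N := xchoose (twin_prime_above N).

Lemma next_twinP N : [/\ N <= next_twin N, prime (next_twin N) & prime (next_twin N).+2].
Proof. exact: elimT and3P (xchooseP (twin_prime_above N)). Qed.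

Fixpoint twin k := if k is k'.+1 then next_twin (twin k').+2 else next_twin 0.

Lemma twin_prime k : prime (twin k) /\ prime (twin k).+2.
Proof. by case: k => [|k] /=; [case: (next_twinP 0) | case: (next_twinP (twin k).+2)]. Qed.

Lemma twin_gap i j : i < j -> (twin i).+2 <= twin j.
Proof.
elim: j => // j IHj; rewrite ltnS leq_eqVlt => /predU1P[->|/IHj ij] /=;
  case: (next_twinP (twin j).+2) => // le_next _ _; lia.
Qed.

Definition twin_label (x : nat) : int :=
  match x with 0 => Posz 0 | 1 => Posz 2 | k.+2 => Posz (twin k).+2 end.

Lemma twin_label_sep m n : m != n -> 1 < `|twin_label m - twin_label n|.
Proof.
have twin_gt1 k : 1 < twin k by case: (twin_prime k) => /prime_gt1.
case: m n => [|[|k]] [|[|l]] //= mn;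
  try (have := twin_gt1 k); try (have := twin_gt1 l); try lia.
by case: (ltngtP k l) => [/twin_gap|/twin_gap|kl]; [lia | lia | rewrite kl eqxx in mn].
Qed.

Lemma twin_label_prime m n : m < 2 -> m != n -> prime `|twin_label m - twin_label n|.
Proof.
case: m n => [|[|//]] [|[|k]] //= _ _; have [p_pr p2_pr] := twin_prime k.
  by rewrite subn0.
by rewrite (_ : `|_|%N = twin k) //; lia.
Qed.

Lemma K11c_twin_labeling c : has_kppd_labeling (@K11c_adj c) 1.
Proof.
have label_sep (u v : 'I_c.+2) : u != v -> 1 < `|twin_label u - twin_label v|.
  by move=> uv; apply: twin_label_sep.
exists (fun x : 'I_c.+2 => twin_label x); split; first exact: sep_labeling_inj.
split=> // u v uv; rewrite bigOmega_prime //.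
have u_neq_v : u != v by apply: contraTneq uv => ->; rewrite /K11c_adj eqxx.
have [u_lt2|u_ge2] := ltnP u 2; first exact: twin_label_prime.
rewrite -abszN opprB twin_label_prime // 1?eq_sym //.
by move: uv; rewrite /K11c_adj /K11_part; lia.
Qed.

End TwinLabeling.

Lemma twin_of_prime_pair (u v : int) :
  prime `|u| -> prime `|v| -> prime `|u - v| -> 2 < `|u| -> 2 < `|v| ->
  exists p, [/\ `|u| <= p.+2, prime p & prime p.+2].
Proof.
have odd_half n : prime n -> 2 < n -> n = (n./2).*2.+1.
  by case/even_prime=> [-> //|n_odd] _; rewrite -[n in LHS]odd_double_half n_odd.
move=> u_pr v_pr uv_pr u_gt2 v_gt2.
have uv2 : `|u - v| = 2.
  have [uv_lt2|uv_gt2|//] := ltngtP `|u - v| 2; first by have := prime_gt1 uv_pr; lia.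
  have := odd_half _ uv_pr uv_gt2; have := odd_half _ u_pr u_gt2.
  have := odd_half _ v_pr v_gt2; lia.
have [uv|vu] : `|u| = (`|v|).+2 \/ `|v| = (`|u|).+2 by lia.
  by exists `|v|; rewrite -uv; split.
by exists `|u|; rewrite -vu; split=> //; lia.
Qed.

Lemma mem_int_window (a x : int) (M : nat) :
  `|x - a| < M -> x \in [seq (a - Posz M + Posz i)%R | i <- iota 0 M.*2].
Proof. by move=> xa; apply/mapP; exists `|(x - a + Posz M)%R|%N; rewrite ?mem_iota; lia. Qed.

Lemma K11c_kppd1_twin_prime c N (L : 'I_c.+2 -> int) :
  kppd_labeling (@K11c_adj c) 1 L -> 2 * N + 8 < c ->
  exists p, N <= p /\ prime p /\ prime p.+2.
Proof.
move=> L_lab c_big; have [L_inj _] := L_lab.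
pose v0 : 'I_c.+2 := ord0; pose v1 : 'I_c.+2 := lift ord0 ord0.
pose part (i : 'I_c) : 'I_c.+2 := lift ord0 (lift ord0 i).
have part_val i : nat_of_ord (part i) = i.+2 by rewrite /part !lift0.
have adj_prime u v : K11c_adj u v -> prime `|L u - L v|.
  move=> uv; apply: (kppd1_adj_prime L_lab uv).
  by apply: contraTneq uv => ->; rewrite /K11c_adj eqxx.
have adj_part_v0 i : K11c_adj (part i) v0 by rewrite /K11c_adj /K11_part part_val.
have adj_part_v1 i : K11c_adj (part i) v1 by rewrite /K11c_adj /K11_part part_val.
pose a := L v0; pose b := L v1; pose M := N.+3.
pose near := [:: b + 2, b - 2 & [seq a - Posz M + Posz i | i <- iota 0 M.*2]]%R.
have /hasP[_ /mapP[i _ ->] far] : has [predC near] [seq L (part i) | i <- enum 'I_c].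
  rewrite has_predC; apply: contraL c_big => /allP near_all.
  have := uniq_leq_size _ near_all; rewrite size_map /= size_map size_iota size_enum_ord.
  suff -> : uniq [seq L (part i) | i <- enum 'I_c] by lia.
  by rewrite map_inj_uniq ?enum_uniq // => i j /L_inj /lift_inj /lift_inj.
move: far; rewrite inE 2!in_cons 2!negb_or => /and3P[/eqP Lb2 /eqP Lb2' not_near].
have u_far : M <= `|L (part i) - a|.
  by rewrite leqNgt; apply: contra not_near; apply: mem_int_window.
have [|||||p [up p_pr p2_pr]] := @twin_of_prime_pair (L (part i) - a) (L (part i) - b).
- exact: adj_prime (adj_part_v0 i).
- exact: adj_prime (adj_part_v1 i).
- by rewrite (_ : _ - _ = b - a)%R ?adj_prime //; lia.
- lia.
- have := prime_gt1 (adj_prime _ _ (adj_part_v1 i)); rewrite -/b; lia.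
by exists p; split; first lia.
Qed.

Theorem mainTheorem7 :
  (forall c : nat, (0 < c)%N -> ppn_eq (@K11c_adj c) 1) <-> twin_prime_conjecture.
Proof.
split=> [ppn1 N | twin_primes c _]; last exact/ppn_eq1/K11c_twin_labeling.
have [_ [[L L_lab] _]] : ppn_eq (@K11c_adj (2 * N + 9)) 1 by apply: ppn1; rewrite addnS.
by apply: (K11c_kppd1_twin_prime L_lab); rewrite ltn_add2l.
Qed.
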